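(* Neither the language $L_{GW}$ of unsigned Gauss words nor the language $L_{SGW}$ of signed Gauss words is recognisable by a non-deterministic one-way register automaton over data words.
   Context: A data word over $\Sigma\times\mathbb N$ ($\Sigma$ finite) is a finite sequence of pairs $(a,n)$ with $a\in\Sigma$, $n\in\mathbb N$; $|w|_s$ denotes the number of occurrences of symbol $s$ in $w$. An unsigned Gauss word is a data word $w$ over $\{U,O\}\times\mathbb N$ such that for every $n$ either $|w|_{(U,n)}=|w|_{(O,n)}=0$ or $|w|_{(U,n)}=|w|_{(O,n)}=1$; $L_{GW}$ is the set of these. A signed Gauss word is a data word $w$ over $\{U^+,O^+,U^-,O^-\}\times\mathbb N$ such that for every $n$ either all counts $|w|_{(U^\pm,n)},|w|_{(O^\pm,n)}$ are $0$, or $|w|_{(U^+,n)}=|w|_{(O^+,n)}=1$ and the $-$ counts are $0$, or $|w|_{(U^-,n)}=|w|_{(O^-,n)}=1$ and the $+$ counts are $0$; $L_{SGW}$ is the set of these. A $k$-register automaton over data words is a tuple $(Q,q_0,F,\tau_0,P)$ with finite state set $Q$, initial state $q_0$, final states $F$, initial register assignment $\tau_0$, and a finite set $P$ of transitions of the forms $(a,i,q)\to(q',d)$ (in state $q$ reading $(a,e)$ with $e$ equal to the content of register $i$: go to $q'$, move in direction $d$) and $(a,q)\to(q',i,d)$ (in state $q$ reading $(a,e)$ with $e$ different from all register contents: go to $q'$, store $e$ in register $i$, move in direction $d$). It is non-deterministic in general (any applicable transition may be chosen) and accepts a word if some run reaches a state of $F$. It is one-way if the head only moves right (directions $d\in\{\mathrm{stay},\mathrm{right}\}$).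 *)

From HB Require Import structures.
From Stdlib Require List.
From mathcomp Require Import all_boot.
Set Implicit Arguments.
Unset Strict Implicit.
Unset Printing Implicit Defensive.

Definition data_word (Sigma : Type) := seq (Sigma * nat).

Inductive dir := DLeft | DStay | DRight.

(* Transitions of a k-register automaton with state set Q over alphabet Sigma:
   TEq a i q q' d   encodes (a,i,q) -> (q',d)
   TFresh a q q' i d encodes (a,q) -> (q',i,d) *)
Inductive transition (Sigma Q : Type) (k : nat) :=
| TEq of Sigma & 'I_k & Q & Q & dir
| TFresh of Sigma & Q & Q & 'I_k & dir.

Record reg_automaton (Sigma : Type) (k : nat) := RegAutomaton {
  ra_state : finType;
  ra_q0 : ra_state;
  ra_F : {set ra_state};
  ra_tau0 : 'I_k -> nat;
  ra_P : seq (transition Sigma ra_state k)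
}.

Definition move (d : dir) (i : nat) : option nat :=
  match d with
  | DLeft => if i is i'.+1 then Some i' else None
  | DStay => Some i
  | DRight => Some i.+1
  end.

Definition config (Sigma : Type) (k : nat) (A : reg_automaton Sigma k) :=
  (ra_state A * nat * ('I_k -> nat))%type.

Definition step (Sigma : eqType) (k : nat) (A : reg_automaton Sigma k)
  (w : data_word Sigma) (c c' : config A) : Prop :=
  let: (q, i, r) := c in
  let: (q', i', r') := c' in
  exists2 t, List.In t (ra_P A) &
  match t with
  | TEq a j p p' d =>
      [/\ p = q, p' = q', onth w i = Some (a, r j),
          move d i = Some i' & forall l, r' l = r l]
  | TFresh a p p' j d =>
      exists e,
      [/\ p = q, p' = q', onth w i = Some (a, e),
          (forall l, r l <> e) & move d i = Some i'] /\
          (forall l, r' l = (if l == j then e else r l))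
  end.

Inductive reach (Sigma : eqType) (k : nat) (A : reg_automaton Sigma k)
  (w : data_word Sigma) : config A -> config A -> Prop :=
| reach_refl c : reach w c c
| reach_step c1 c2 c3 : step w c1 c2 -> reach w c2 c3 -> reach w c1 c3.

Definition accepts (Sigma : eqType) (k : nat) (A : reg_automaton Sigma k)
  (w : data_word Sigma) : Prop :=
  exists q r, reach w (ra_q0 A, 0, ra_tau0 A) (q, size w, r) /\ q \in ra_F A.

Definition dir_of (Sigma Q : Type) (k : nat) (t : transition Sigma Q k) : dir :=
  match t with TEq _ _ _ _ d => d | TFresh _ _ _ _ d => d end.

Definition one_way (Sigma : Type) (k : nat) (A : reg_automaton Sigma k) : Prop :=
  forall t, List.In t (ra_P A) -> dir_of t <> DLeft.

Definition recognises (Sigma : eqType) (k : nat) (A : reg_automaton Sigma k)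
  (L : data_word Sigma -> Prop) : Prop :=
  forall w, accepts A w <-> L w.

Inductive uo := U | O.
Definition uo_eqb (x y : uo) : bool :=
  match x, y with U, U | O, O => true | _, _ => false end.
Lemma uo_eqP : Equality.axiom uo_eqb.
Proof. by case; case; constructor. Qed.
HB.instance Definition _ := hasDecEq.Build uo uo_eqP.

Inductive suo := Up | Op | Um | Om.
Definition suo_eqb (x y : suo) : bool :=
  match x, y with
  | Up, Up | Op, Op | Um, Um | Om, Om => true | _, _ => false end.
Lemma suo_eqP : Equality.axiom suo_eqb.
Proof. by case; case; constructor. Qed.
HB.instance Definition _ := hasDecEq.Build suo suo_eqP.

Definition L_GW (w : data_word uo) : Prop :=
  forall n : nat,
    (count_mem (U, n) w = 0 /\ count_mem (O, n) w = 0) \/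
    (count_mem (U, n) w = 1 /\ count_mem (O, n) w = 1).

Definition L_SGW (w : data_word suo) : Prop :=
  forall n : nat,
    (count_mem (Up, n) w = 0 /\ count_mem (Op, n) w = 0 /\
     count_mem (Um, n) w = 0 /\ count_mem (Om, n) w = 0) \/
    (count_mem (Up, n) w = 1 /\ count_mem (Op, n) w = 1 /\
     count_mem (Um, n) w = 0 /\ count_mem (Om, n) w = 0) \/
    (count_mem (Um, n) w = 1 /\ count_mem (Om, n) w = 1 /\
     count_mem (Up, n) w = 0 /\ count_mem (Op, n) w = 0).

From Stdlib Require Import FunctionalExtensionality.
From mathcomp Require Import all_boot.
Set Implicit Arguments.
Unset Strict Implicit.
Unset Printing Implicit Defensive.

(* Feed a one-way automaton with k registers the Gauss word
   (a,d_0)...(a,d_k)(b,d_0)...(b,d_k), where the d_i are distinct and avoid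
   the initial registers.  When the head reaches the middle of the word, at
   most k of the k+1 values d_i are stored, so some d_x is forgotten, and a
   value e that never occurred is not stored either.  Exchanging x and e in
   the rest of the run is invisible to the automaton, which therefore also
   accepts the word in which (b,d_x) is replaced by (b,e); that word is not
   a Gauss word. *)

Definition map_data (Sigma : Type) (f : nat -> nat) (w : data_word Sigma) :
  data_word Sigma := [seq (p.1, f p.2) | p <- w].

Section Runs.
Variables (Sigma : eqType) (k : nat) (A : reg_automaton Sigma k).
Implicit Types (w u v : data_word Sigma) (c : config A).

Definition rename_config (f : nat -> nat) c : config A :=
  (c.1.1, c.1.2, fun l => f (c.2 l)).

Lemma step_rename w w' f c c' : injective f ->
  (forall p, onth w c.1.2 = Some p -> onth w' c.1.2 = Some (p.1, f p.2)) ->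
  step w c c' -> step w' (rename_config f c) (rename_config f c').
Proof.
move: c c' => [[q i] r] [[q' i'] r'] injf /= Hw [t tP Ht]; exists t => //.
case: t {tP} Ht => [a j p p' d | a p p' j d].
- by case=> -> -> /Hw Hw' Hm Hr; split => // l /=; rewrite Hr.
- case=> e [[-> -> /Hw Hw' Hn Hm] Hr]; exists (f e); split; first split => //.
  + by move=> l /injf; apply: Hn.
  + by move=> l /=; rewrite Hr; case: (l == j).
Qed.

Lemma step_extend w w' (q q' : ra_state A) i i' (r r' : 'I_k -> nat) :
  (forall p, onth w i = Some p -> onth w' i = Some p) ->
  step w (q, i, r) (q', i', r') -> step w' (q, i, r) (q', i', r').
Proof. by move=> Hw; apply: (step_rename (@inj_id nat)) => -[x y] /Hw. Qed.

Lemma reach_prefix u v c c' : reach u c c' -> reach (u ++ v) c c'.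
Proof.
elim=> [|[[q i] r] [[q' i'] r'] c'' Hs _ IH]; first exact: reach_refl.
apply: reach_step IH; apply: step_extend Hs => p Hp.
by rewrite onth_cat -onthTE Hp.
Qed.

Lemma reach_trans w c1 c2 c3 : reach w c1 c2 -> reach w c2 c3 -> reach w c1 c3.
Proof. by elim=> // ? ? ? Hs _ IH /IH; apply: reach_step Hs. Qed.

Lemma reach_avoid w e c c' : reach w c c' ->
  (forall i p, onth w i = Some p -> p.2 != e) ->
  (forall l, c.2 l != e) -> forall l, c'.2 l != e.
Proof.
elim=> // [[[q i] r]] [[q' i'] r'] c'' [t _ Ht] _ IH Hw Hr; apply: IH => //= l.
case: t Ht => [a j p p' d | a p p' j d]; first by case=> _ _ _ _ ->.
case=> e' [[_ _ /Hw He' _ _] ->]; by case: (l == j).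
Qed.

Hypothesis one_way_A : one_way A.

Lemma step_head w c c' : step w c c' -> c.1.2 <= c'.1.2 <= c.1.2.+1.
Proof.
move: c c' => [[q i] r] [[q' i'] r'] /= [t tP Ht].
have : dir_of t <> DLeft := one_way_A tP.
have Hm : move (dir_of t) i = Some i'.
  by case: t {tP} Ht => [????? [] | ????? [? [[]]]].
by case: (dir_of t) Hm => [_ /(_ erefl) []|[<-] _|[<-] _] //=; rewrite leqnn leqnSn.
Qed.

(* Positions before [m] are never read again, as the head never moves left. *)
Lemma reach_rename w w' f m c c' : injective f ->
  (forall i p, m <= i -> onth w i = Some p -> onth w' i = Some (p.1, f p.2)) ->
  m <= c.1.2 -> reach w c c' -> reach w' (rename_config f c) (rename_config f c').
Proof.
move=> injf Hw + Hr; elim: Hr => [c0 _|c1 c2 c3 Hs _ IH Hm]; first exact: reach_refl.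
apply: reach_step (step_rename injf (fun p => Hw _ p Hm) Hs) (IH _).
by case/andP: (step_head Hs) => /(leq_trans Hm).
Qed.

Lemma reach_split u v c c'' : reach (u ++ v) c c'' ->
  c.1.2 <= size u <= c''.1.2 ->
  exists c', [/\ c'.1.2 = size u, reach u c c' & reach (u ++ v) c' c''].
Proof.
elim=> [c0|c0 c1 c2 Hs Hr IH].
  move=> /andP[H1 H2]; exists c0.
  by split; [apply/eqP; rewrite eqn_leq H1 H2 | apply: reach_refl ..].
move=> /andP[H1 H2]; case: (ltnP c0.1.2 (size u)) => Hl; last first.
  by exists c0; split; [apply/eqP; rewrite eqn_leq H1 Hl | apply: reach_refl |
    apply: reach_step Hs Hr].
have /andP[_ H01] := step_head Hs.
have [c' [E pre suf]] := IH (introT andP (conj (leq_trans H01 Hl) H2)).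
exists c'; split => //; apply: reach_step pre.
move: c0 c1 Hs Hl {Hr IH H1 H01} => [[q i] r] [[q' i'] r'] Hs /= Hl.
by apply: (step_extend _ Hs) => p; rewrite onth_cat Hl.
Qed.

Lemma reach_rename_suffix u v f q r c' : injective f ->
  (forall l, f (r l) = r l) ->
  reach (u ++ v) (q, size u, r) c' ->
  reach (u ++ map_data f v) (q, size u, r) (rename_config f c').
Proof.
move=> injf fr Hr.
have -> : (q, size u, r) = rename_config f (q, size u, r).
  by rewrite /rename_config /=; congr (_, _, _); apply: functional_extensionality.
apply: reach_rename injf _ (leqnn _) Hr => i p Hi.
by rewrite !onth_cat ltnNge Hi /= onth_map => ->.
Qed.

End Runs.

Lemma exists_unstored (k : nat) (r : 'I_k -> nat) ds : uniq ds -> k < size ds ->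
  exists2 y, y \in ds & forall l, r l != y.
Proof.
move=> uds kds; have [/hasP[y yds yr]|/hasPn Hds] :=
  boolP (has (fun y => y \notin [seq r l | l <- enum 'I_k]) ds).
  by exists y => // l; apply: contraNneq yr => <-; rewrite map_f ?mem_enum.
have := uniq_leq_size uds (fun y yds => negbNE (Hds y yds)).
by rewrite size_map size_enum_ord leqNgt kds.
Qed.

Definition swapn (a b y : nat) := if y == a then b else if y == b then a else y.

Lemma swapnK a b : involutive (swapn a b).
Proof.
move=> y; rewrite /swapn.
case: (eqVneq y a) => [->|ya]; first by rewrite eqxx; case: eqVneq.
case: (eqVneq y b) => [->|yb]; first by rewrite eqxx.
by rewrite (negbTE ya) (negbTE yb).
Qed.

Lemma swapn_id a b y : y != a -> y != b -> swapn a b y = y.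
Proof. by rewrite /swapn => /negbTE -> /negbTE ->. Qed.

Lemma accepts_swap_forgotten (Sigma : eqType) (k : nat) (A : reg_automaton Sigma k)
    (a b : Sigma) ds e :
  one_way A -> uniq ds -> k < size ds -> e \notin ds ->
  (forall l, ra_tau0 A l != e) ->
  accepts A (map (pair a) ds ++ map (pair b) ds) ->
  exists2 x, x \in ds &
    accepts A (map (pair a) ds ++ map_data (swapn x e) (map (pair b) ds)).
Proof.
move=> ow uds kds eds tau0e [q [r [Hr qF]]].
set u := map (pair a) ds; set v := map (pair b) ds.
have Hmid : 0 <= size u <= size (u ++ v) by rewrite size_cat leq_addr.
have [[[q' i'] r'] [/= -> pre suf]] := reach_split ow Hr Hmid.
have r'e : forall l, r' l != e.
  apply: (reach_avoid pre) => [i p Hp|//].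
  have /mapP[y yds ->] : p \in u by apply/onthP; exists i.
  by apply: contraNneq eds => <-.
have [x xds xr'] := exists_unstored r' uds kds.
exists x => //; exists q, (fun l => swapn x e (r l)); split => //.
apply: reach_trans (reach_prefix _ pre) _.
have -> : size (u ++ map_data (swapn x e) v) = size (u ++ v).
  by rewrite !size_cat /map_data !size_map.
have fr' : forall l, swapn x e (r' l) = r' l by move=> l; rewrite swapn_id.
exact: (reach_rename_suffix ow (inv_inj (swapnK x e)) fr' suf).
Qed.

Lemma mem_map_pair (Sigma : eqType) (a c : Sigma) (y : nat) ds :
  ((c, y) \in map (pair a) ds) = (c == a) && (y \in ds).
Proof.
apply/mapP/andP => [[y' y'ds [-> ->]]|[/eqP -> yds]]; last by exists y.
by rewrite eqxx.
Qed.

Lemma count_mem_doubled (Sigma : eqType) (a b c : Sigma) (y : nat) ds :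
  a != b -> uniq ds ->
  count_mem (c, y) (map (pair a) ds ++ map (pair b) ds) =
  ((c == a) || (c == b)) && (y \in ds).
Proof.
move=> ab uds; rewrite count_uniq_mem ?mem_cat ?mem_map_pair.
  by case: (y \in ds); rewrite ?andbT ?andbF.
rewrite cat_uniq !map_inj_uniq => [|? ? []|? ? []] //.
rewrite uds andbT; apply/hasPn => _ /mapP[z _ ->].
by rewrite mem_map_pair negb_and eq_sym ab.
Qed.

Lemma one_way_recognised_unbalanced (Sigma : eqType) (k : nat)
    (A : reg_automaton Sigma k) (a b : Sigma) (L : data_word Sigma -> Prop) :
  a != b -> one_way A -> recognises A L ->
  (forall ds, uniq ds -> L (map (pair a) ds ++ map (pair b) ds)) ->
  exists w x, [/\ L w, count_mem (a, x) w != 0 & count_mem (b, x) w = 0].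
Proof.
move=> ab ow recA Ldoubled.
pose e := (\max_(l < k) ra_tau0 A l).+1.
pose ds := iota e.+1 k.+1.
have uds : uniq ds by apply: iota_uniq.
have kds : k < size ds by rewrite size_iota.
have eds : e \notin ds by rewrite mem_iota ltnn.
have tau0e l : ra_tau0 A l != e by rewrite neq_ltn ltnS leq_bigmax.
have [x xds acc] :=
  accepts_swap_forgotten ow uds kds eds tau0e ((recA _).2 (Ldoubled ds uds)).
exists (map (pair a) ds ++ map_data (swapn x e) (map (pair b) ds)), x.
split; first exact: (recA _).1 acc.
  by apply/eqP => /count_memPn; rewrite mem_cat mem_map_pair eqxx xds.
apply/count_memPn; rewrite mem_cat mem_map_pair eq_sym (negbTE ab) andFb orFb.
apply/mapP => -[_ /mapP[y yds ->] /= [x_swap]].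
have ye : y = e by rewrite -(swapnK x e y) -x_swap /swapn eqxx.
by move: yds; rewrite ye (negbTE eds).
Qed.

Theorem proposition2 :
  (~ exists (k : nat) (A : reg_automaton uo k), one_way A /\ recognises A L_GW) /\
  (~ exists (k : nat) (A : reg_automaton suo k), one_way A /\ recognises A L_SGW).
Proof.
split=> -[k [A [ow recA]]].
- have [ds uds|w [x [Lw ax bx]]] :=
    one_way_recognised_unbalanced (a := U) (b := O) isT ow recA.
    by move=> y; rewrite !count_mem_doubled //=; case: (y \in ds); [right|left].
  by case: (Lw x) => -[Hu Ho]; [rewrite Hu in ax | rewrite Ho in bx].
- have [ds uds|w [x [Lw ax bx]]] :=
    one_way_recognised_unbalanced (a := Up) (b := Op) isT ow recA.
    by move=> y; rewrite !count_mem_doubled //=; case: (y \in ds); [right; left|left].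
  by case: (Lw x) => [[H _]|[[_ [H _]]|[_ [_ [H _]]]]];
    [rewrite H in ax | rewrite H in bx | rewrite H in ax].
Qed.
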